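(* An even nonnegative integer $n$ satisfies $v(n)=2$ if and only if $n\in\{18,22,24,28\}$.
   Context: A hyperbinary expansion of a nonnegative integer $n$ is a word $x_0\cdots x_k$ over $\{0,1,2\}$ with $x_0\ne0$ and $\sum_i x_i2^{k-i}=n$. The empty word is the unique hyperbinary expansion of $0$. Write $\mathcal H(n)$ for the set of such expansions and $b(n)=|\mathcal H(n)|$. $A(n)$ is the directed graph on $\mathcal H(n)$ with an arc from $\mathbf x02\mathbf y$ to $\mathbf x10\mathbf y$, from $2\mathbf y$ to $10\mathbf y$, and from $\mathbf x12\mathbf y$ to $\mathbf x20\mathbf y$, for arbitrary words $\mathbf x,\mathbf y$ whenever both endpoints lie in $\mathcal H(n)$. $A(n)$ is connected. $v(n)$ denotes the cyclomatic number of $A(n)$: (number of arcs) $-\,b(n)+1$. *)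

From mathcomp Require Import all_boot all_order all_algebra.
Set Implicit Arguments. Unset Strict Implicit. Unset Printing Implicit Defensive.

(* Words over {0,1,2} are represented as seq nat (most significant digit first). *)

Definition hvalue (w : seq nat) : nat := foldl (fun acc d => acc * 2 + d) 0 w.

(* w is a hyperbinary expansion of n: digits in {0,1,2}, x_0 <> 0 (vacuous for
   the empty word), and value n. *)
Definition is_hyp (n : nat) (w : seq nat) : bool :=
  [&& all (fun d => d < 3) w, head 1 w != 0 & hvalue w == n].

Fixpoint words (k : nat) : seq (seq nat) :=
  if k is k'.+1 then
    flatten [seq [seq d :: w | w <- words k'] | d <- [:: 0; 1; 2]]
  else [:: [::]].

Definition words_upto (m : nat) : seq (seq nat) :=
  flatten [seq words k | k <- iota 0 m.+1].

(* H(n): a hyperbinary expansion of n with leading digit >= 1 and length L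
   satisfies n >= 2^(L-1) >= L, so every expansion has length <= n and
   H(n) is the (duplicate-free) list of words of length <= n that are
   hyperbinary expansions of n. *)
Definition Hset (n : nat) : seq (seq nat) := filter (is_hyp n) (words_upto n).

Definition b (n : nat) : nat := size (Hset n).

(* Arc relation of A(n): u -> w iff
   u = x 0 2 y, w = x 1 0 y   or   u = 2 y, w = 1 0 y   or
   u = x 1 2 y, w = x 2 0 y   for some words x, y (x = take i u, y = drop (i+2) u). *)
Definition arc (u w : seq nat) : bool :=
  has (fun i => (u == take i u ++ [:: 0; 2] ++ drop i.+2 u)
                && (w == take i u ++ [:: 1; 0] ++ drop i.+2 u)) (iota 0 (size u))
  || [&& u != [::], head 0 u == 2 & w == [:: 1; 0] ++ behead u]
  || has (fun i => (u == take i u ++ [:: 1; 2] ++ drop i.+2 u)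
                && (w == take i u ++ [:: 2; 0] ++ drop i.+2 u)) (iota 0 (size u)).

Definition arcs (n : nat) : seq (seq nat * seq nat) :=
  [seq p <- [seq (u, w) | u <- Hset n, w <- Hset n] | arc p.1 p.2].

Definition v (n : nat) : int := (size (arcs n))%:Z - (b n)%:Z + 1.

From Pilot Require Import Defs.
From mathcomp Require Import all_boot all_order all_algebra zify.
Set Implicit Arguments. Unset Strict Implicit. Unset Printing Implicit Defensive.

(* Deleting the last digit gives H(2k+1) = H(k)1 and H(2k+2) = H(k+1)0 + H(k)2.
   An arc between two words with the same last digit is an arc between their
   prefixes, no arc goes from a word ending in 0 to one ending in 2, and the
   arcs from u2 to a word ending in 0 are the carries u2 -> u'0, where u' is u
   with its last digit (which must be < 2) increased.  Counting these carries
   yields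
     b(2k+1) = b(k),  b(2k+2) = b(k+1) + b(k),
     v(2k+1) = v(k),  v(2k+2) = v(k+1) + v(k) + b(k/2) - 1,
   so b >= 1, v >= 0, and v(2k+2) <= 2 forces v <= 2 at the even one of k and
   k+1.  By induction, an even n with v(n) <= 2 is then a power of 2, of the
   form 2^a - 2, or one of 10, 12, 18, 22, 24, 28: the closed forms
   b(2^a) = a + 1 and b(2^a - 2) = a make the b-term too large for the other
   neighbours of these families.  Both families have v = 0, and the six
   exceptions are evaluated with the recurrences. *)

(* [carry_step x u w]: u = p ++ [:: x; 2] ++ s and w = p ++ [:: x.+1; 0] ++ s. *)
Fixpoint carry_step (x : nat) (u w : seq nat) : bool :=
  if u is a :: u' then
    [&& a == x, head 0 u' == 2 & w == x.+1 :: 0 :: behead u']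
    || (if w is c :: w' then (a == c) && carry_step x u' w' else false)
  else false.

Definition lead_carry (u w : seq nat) : bool :=
  [&& u != [::], head 0 u == 2 & w == [:: 1; 0] ++ behead u].

Lemma has_carry_step x u w :
  has (fun i => (u == take i u ++ [:: x; 2] ++ drop i.+2 u)
             && (w == take i u ++ [:: x.+1; 0] ++ drop i.+2 u)) (iota 0 (size u))
  = carry_step x u w.
Proof.
elim: u w => [|a u IH] w //=.
rewrite (iotaDl 1 0) has_map; congr orb.
  by case: u {IH} => [|c u] /=; rewrite !eqseq_cons ?drop0 ?andbF // eqxx andbT andbA.
case: w => [|c w] /=.
  by apply/negbTE/hasPn => i _ /=; rewrite andbF.
rewrite -IH; case: (eqVneq a c) => [<-|ne_ac] /=.
  by apply: eq_has => i /=; rewrite !eqseq_cons !eqxx.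
by apply/negbTE/hasPn => i _ /=; rewrite !eqseq_cons [c == a]eq_sym (negbTE ne_ac) andbF.
Qed.

Lemma arcE u w : Defs.arc u w = carry_step 0 u w || lead_carry u w || carry_step 1 u w.
Proof. by rewrite /Defs.arc -!has_carry_step. Qed.

Lemma carry_step_nil x u : carry_step x u [::] = false.
Proof. by case: u => [|a u] //=; rewrite !andbF. Qed.

Lemma carry_step_single x d w : carry_step x [:: d] w = false.
Proof. by case: w => [|c w] /=; rewrite ?andbF. Qed.

Lemma carry_step_rcons x u a d w e :
  carry_step x (rcons (rcons u a) d) (rcons w e)
  = [&& a == x, d == 2, e == 0 & w == rcons u x.+1]
    || (d == e) && carry_step x (rcons u a) w.
Proof.
elim: u w => [|c u IH] w.
  case: w => [|c [|c' w]]; rewrite /= ?eqseq_cons ?andbF ?orbF ?andbT //.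
    by rewrite [_ && (e == 0)]andbC.
  by case: w => [|? ?]; rewrite !andbF.
rewrite rcons_cons /=; case: w => [|c' w] /=.
  by rewrite carry_step_nil /= !eqseq_cons /= !andbF.
rewrite (IH w) -rcons_cons; case Es: (rcons u a) => [|b s]; first by case: (u) Es.
rewrite /= !eqseq_cons -rcons_cons eqseq_rcons [e == d]eq_sym [c' == c]eq_sym.
by case: (d == e); case: (c == c'); rewrite /= ?andbT ?andbF ?orbF // orbCA.
Qed.

Lemma lead_carry_rcons u d w e :
  lead_carry (rcons u d) (rcons w e)
  = [&& u == [::], d == 2, e == 0 & w == [:: 1]] || (d == e) && lead_carry u w.
Proof.
rewrite /lead_carry; case: u => [|a u] /=.
  by rewrite -[[:: 1; 0]]/(rcons [:: 1] 0) eqseq_rcons andbF orbF [_ && (e == 0)]andbC.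
rewrite -[[:: 1, 0 & _]]/(rcons [:: 1, 0 & u] d) eqseq_rcons [e == d]eq_sym.
by case: (d == e); rewrite ?andbF ?andbT.
Qed.

Definition incr (u : seq nat) : option (seq nat) :=
  if u is a :: u' then
    if last a u' < 2 then Some (rcons (belast a u') (last a u').+1) else None
  else Some [:: 1].

Lemma incr_rcons u a : incr (rcons u a) = if a < 2 then Some (rcons u a.+1) else None.
Proof. by case: u => [|b u] //=; rewrite belast_rcons last_rcons. Qed.

Lemma arc_rcons u d w e :
  Defs.arc (rcons u d) (rcons w e)
  = [&& d == 2, e == 0 & incr u == Some w] || (d == e) && Defs.arc u w.
Proof.
rewrite !arcE lead_carry_rcons; case/lastP: u => [|u a].
  by rewrite !carry_step_single /= !andbF !orbF [w == _]eq_sym.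
have -> : (rcons u a == [::]) = false by case: u.
rewrite !carry_step_rcons incr_rcons.
case: a => [|[|a]] /=; rewrite ?(inj_eq (@Some_inj _)) ?[rcons u _ == w]eq_sym ?andbF ?orbF;
  case: (d == e); rewrite /= ?andbF ?orbF ?orbA //.
by rewrite [_ || [&& _, _ & _]]orbC orbA.
Qed.

Lemma mem_words k w : (w \in words k) = (size w == k) && all (fun d => d < 3) w.
Proof.
elim: k w => [|k IH] [|c w] //=; rewrite !mem_cat.
  have nil_notin d : ([::] \in [seq d :: x | x <- words k]) = false by apply/mapP => -[].
  by rewrite !nil_notin.
have mem_cons d : (c :: w \in [seq d :: x | x <- words k]) = (c == d) && (w \in words k).
  by apply/mapP/andP => [[x ? [-> ->]] | [/eqP -> ?]] //; exists w.
rewrite !mem_cons in_nil orbF IH eqSS.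
by case: (c) => [|[|[|c']]]; rewrite /= ?andbF ?orbF.
Qed.

Lemma uniq_words k : uniq (words k).
Proof.
elim: k => // k IH.
by apply: (allpairs_uniq (f := cons)) => // -[d w] [d' w'] _ _ [-> ->].
Qed.

Lemma words_uptoS m : words_upto m.+1 = words_upto m ++ words m.+1.
Proof. by rewrite /words_upto -addn1 iotaD map_cat flatten_cat /= cats0. Qed.

Lemma mem_words_upto m w : (w \in words_upto m) = (size w <= m) && all (fun d => d < 3) w.
Proof.
elim: m => [|m IH]; first by case: w.
by rewrite words_uptoS mem_cat IH mem_words -andb_orl orbC -ltnS -leq_eqVlt.
Qed.

Lemma uniq_words_upto m : uniq (words_upto m).
Proof.
elim: m => // m IH; rewrite words_uptoS cat_uniq IH uniq_words andbT andTb.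
by apply/hasPn => w; rewrite mem_words mem_words_upto => /andP[/eqP-> _]; rewrite ltnn.
Qed.

Lemma hvalue_rcons w d : hvalue (rcons w d) = hvalue w * 2 + d.
Proof. by rewrite /hvalue -cats1 foldl_cat. Qed.

Lemma head_rcons (d0 : nat) x d : head d0 (rcons x d) = head d x.
Proof. by case: x. Qed.

Lemma size_le_hvalue w : head 1 w != 0 -> size w <= hvalue w.
Proof.
elim/last_ind: w => // x d IH; rewrite head_rcons size_rcons hvalue_rcons.
by case: x IH => [|a x] /= IH; [case: d | move/IH; lia].
Qed.

Lemma mem_Hset n w : (w \in Hset n) = is_hyp n w.
Proof.
rewrite mem_filter mem_words_upto andb_idr // => /and3P[-> head_w /eqP <-].
by rewrite size_le_hvalue.
Qed.

Lemma uniq_Hset n : uniq (Hset n).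
Proof. exact/filter_uniq/uniq_words_upto. Qed.

Lemma is_hyp_rcons n x d :
  is_hyp n (rcons x d)
  = [&& d < 3, all (fun d => d < 3) x, head d x != 0 & hvalue x * 2 + d == n].
Proof. by rewrite /is_hyp all_rcons head_rcons hvalue_rcons -andbA. Qed.

Lemma Hset_odd k : perm_eq (Hset k.*2.+1) [seq rcons x 1 | x <- Hset k].
Proof.
apply: uniq_perm; rewrite ?(map_inj_uniq (@rcons_injl _ 1)) ?uniq_Hset // => w.
rewrite mem_Hset; apply/idP/mapP => [|[x x_in ->]].
  case/lastP: w => [|x d] //.
  rewrite is_hyp_rcons => /and4P[d_lt3 digits_x head_x /eqP val_x].
  have d1 : d = 1 by lia.
  subst d; exists x => //; rewrite mem_Hset /is_hyp digits_x head_x /=.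
  by apply/eqP; lia.
move: x_in; rewrite mem_Hset => /and3P[digits_x head_x /eqP val_x].
by rewrite is_hyp_rcons digits_x head_x /=; apply/eqP; lia.
Qed.

Lemma Hset_even k :
  perm_eq (Hset k.+1.*2) ([seq rcons x 0 | x <- Hset k.+1] ++ [seq rcons x 2 | x <- Hset k]).
Proof.
apply: uniq_perm; first exact: uniq_Hset.
  rewrite cat_uniq !(map_inj_uniq (@rcons_injl _ _)) !uniq_Hset andbT andTb.
  by apply/hasPn => _ /mapP[x _ ->]; apply/mapP => -[y _ /rcons_inj[]].
move=> w; rewrite mem_Hset mem_cat; apply/idP/orP.
  case/lastP: w => [|x d] //; rewrite is_hyp_rcons.
  case/and4P=> d_lt3 digits_x head_x /eqP val_x.
  case: d head_x val_x d_lt3 => [|[|[|d]]] head_x val_x // _; [left|lia|right];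
    apply/mapP; exists x => //; rewrite mem_Hset /is_hyp digits_x;
    case: x head_x val_x {digits_x} => [|a x'] //= head_x val_x;
    by rewrite ?head_x /=; apply/eqP; lia.
case=> /mapP[x x_in ->]; move: x_in; rewrite mem_Hset is_hyp_rcons;
  case/and3P=> -> head_x /eqP val_x;
  by case: x head_x val_x => [|a x'] //= head_x val_x; rewrite ?head_x /=; apply/eqP; lia.
Qed.

Definition arc_count (s t : seq (seq nat)) : nat := \sum_(u <- s) count (Defs.arc u) t.

Lemma size_arcs n : size (arcs n) = arc_count (Hset n) (Hset n).
Proof.
rewrite /arcs /arc_count; move: {1 4}(Hset n) => t.
elim: (Hset n) => [|u s IH]; first by rewrite big_nil.
by rewrite allpairs_cons filter_cat size_cat IH big_cons size_filter count_map.
Qed.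

Lemma perm_arc_count s1 s2 t1 t2 :
  perm_eq s1 s2 -> perm_eq t1 t2 -> arc_count s1 t1 = arc_count s2 t2.
Proof.
move=> eq_s eq_t; rewrite /arc_count (perm_big _ eq_s).
by apply: eq_bigr => u _; apply: permP.
Qed.

Lemma arc_count_catl s1 s2 t : arc_count (s1 ++ s2) t = arc_count s1 t + arc_count s2 t.
Proof. exact: big_cat. Qed.

Lemma arc_count_catr s t1 t2 : arc_count s (t1 ++ t2) = arc_count s t1 + arc_count s t2.
Proof. by rewrite /arc_count -big_split; apply: eq_bigr => u _; rewrite count_cat. Qed.

Lemma arc_count_rcons s d t e :
  arc_count [seq rcons u d | u <- s] [seq rcons w e | w <- t]
  = \sum_(u <- s) count (fun w => [&& d == 2, e == 0 & incr u == Some w]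
                                  || (d == e) && Defs.arc u w) t.
Proof.
rewrite /arc_count big_map; apply: eq_bigr => u _.
by rewrite count_map; apply: eq_count => w; rewrite /= arc_rcons.
Qed.

Lemma arc_count_rcons_eq s t d :
  arc_count [seq rcons u d | u <- s] [seq rcons w d | w <- t] = arc_count s t.
Proof.
rewrite arc_count_rcons; apply: eq_bigr => u _; apply: eq_count => w.
by rewrite eqxx; case: eqP => [->|].
Qed.

Lemma incr_is_hyp n u w : is_hyp n u -> incr u = Some w -> is_hyp n.+1 w.
Proof.
case/lastP: u => [|x a]; first by case/and3P=> _ _ /eqP <- [<-].
rewrite incr_rcons is_hyp_rcons; case: (ltnP a 2) => // a_lt2.
case/and4P=> _ digits_x head_x /eqP val_x [<-]; rewrite is_hyp_rcons ltnS a_lt2 digits_x.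
by case: x head_x val_x {digits_x} => [|c x'] /= head_x val_x; rewrite ?head_x; lia.
Qed.

Lemma count_incr n u :
  u \in Hset n -> count (fun w => incr u == Some w) (Hset n.+1) = (incr u != None).
Proof.
rewrite mem_Hset; case E: (incr u) => [w|] hyp_u; last by rewrite count_pred0.
have w_in : w \in Hset n.+1 by rewrite mem_Hset (incr_is_hyp hyp_u E).
rewrite (eq_count (a2 := pred1 w)) => [|w']; last by rewrite /= (inj_eq (@Some_inj _)) eq_sym.
by rewrite (count_uniq_mem _ (uniq_Hset _)) w_in.
Qed.

Lemma arc_count_odd k :
  arc_count (Hset k.*2.+1) (Hset k.*2.+1) = arc_count (Hset k) (Hset k).
Proof. by rewrite (perm_arc_count (Hset_odd k) (Hset_odd k)) arc_count_rcons_eq. Qed.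

Lemma arc_count_even k :
  arc_count (Hset k.+1.*2) (Hset k.+1.*2)
  = arc_count (Hset k.+1) (Hset k.+1) + arc_count (Hset k) (Hset k)
    + count (fun u => incr u != None) (Hset k).
Proof.
rewrite (perm_arc_count (Hset_even k) (Hset_even k)) !arc_count_catl !arc_count_catr.
have no_arc_02 :
    arc_count [seq rcons u 0 | u <- Hset k.+1] [seq rcons w 2 | w <- Hset k] = 0.
  by rewrite arc_count_rcons big1 // => u _; rewrite count_pred0.
have carries :
    arc_count [seq rcons u 2 | u <- Hset k] [seq rcons w 0 | w <- Hset k.+1]
    = count (fun u => incr u != None) (Hset k).
  rewrite arc_count_rcons -sumn_count sumnE big_map !big_seq; apply: eq_bigr => u u_in.
  by rewrite -(count_incr u_in); apply: eq_count => w; rewrite orbF.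
by rewrite !arc_count_rcons_eq no_arc_02 carries; lia.
Qed.

Variant double_spec : nat -> Type :=
  | DoubleZero : double_spec 0
  | DoubleOdd k : double_spec k.*2.+1
  | DoubleEven k : double_spec k.+1.*2.

Lemma doubleP n : double_spec n.
Proof.
rewrite -[n]odd_double_half; case: (odd n) => /=; first exact: DoubleOdd.
by case: n./2 => [|k]; [exact: DoubleZero | exact: DoubleEven].
Qed.

Lemma double_ind (P : nat -> Prop) :
  P 0 -> (forall k, P k -> P k.*2.+1) -> (forall k, P k -> P k.+1 -> P k.+1.*2) ->
  forall n, P n.
Proof.
move=> P0 Podd Peven; elim/ltn_ind => n IH.
case: (doubleP n) IH => [|k|k] IH //; [apply: Podd | apply: Peven]; apply: IH; lia.
Qed.

Lemma b_odd k : b k.*2.+1 = b k.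
Proof. by rewrite /b (perm_size (Hset_odd k)) size_map. Qed.

Lemma b_even k : b k.+1.*2 = b k.+1 + b k.
Proof. by rewrite /b (perm_size (Hset_even k)) size_cat !size_map. Qed.

Lemma count_incr_Hset n : count (fun u => incr u != None) (Hset n) = b n./2.
Proof.
case: (doubleP n) => [|k|k] //.
  rewrite (permP (Hset_odd k)) count_map -[_./2]/(uphalf k.*2) uphalf_double /b.
  by rewrite -count_predT; apply: eq_count => x; rewrite /= incr_rcons.
rewrite (permP (Hset_even k)) count_cat !count_map doubleK /b -count_predT.
rewrite [X in _ + X](eq_count (a2 := pred0)) ?count_pred0 ?addn0 => [|x]; last first.
  by rewrite /= incr_rcons.
by apply: eq_count => x; rewrite /= incr_rcons.
Qed.

Lemma v_odd k : v k.*2.+1 = v k.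
Proof. by rewrite /v !size_arcs arc_count_odd b_odd. Qed.

Lemma v_even k : v k.+1.*2 = (v k.+1 + v k + (b k./2)%:Z - 1)%R.
Proof.
rewrite /v !size_arcs arc_count_even b_even count_incr_Hset !PoszD; lia.
Qed.

Lemma b_gt0 n : 0 < b n.
Proof.
by elim/double_ind: n => [//|k IH|k _ IH]; rewrite ?b_odd // b_even addn_gt0 IH.
Qed.

Lemma v_ge0 n : (0 <= v n)%R.
Proof.
elim/double_ind: n => [//|k|k IHk IHk1]; rewrite ?v_odd // v_even.
by have := b_gt0 k./2; lia.
Qed.

Lemma pow2_sub1_double a : 2 ^ a.+1 - 1 = (2 ^ a - 1).*2.+1.
Proof. by rewrite expnS; have := expn_gt0 2 a; lia. Qed.

Lemma pow2_double a : 2 ^ a.+1 = (2 ^ a - 1).+1.*2.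
Proof. by rewrite expnS; have := expn_gt0 2 a; lia. Qed.

Lemma pow2_sub2_double a : 2 ^ a.+2 - 2 = (2 ^ a.+1 - 2).+1.*2.
Proof. by rewrite !expnS; have := expn_gt0 2 a; lia. Qed.

Lemma b_pow2_sub1 a : b (2 ^ a - 1) = 1.
Proof. by elim: a => // a IH; rewrite pow2_sub1_double b_odd. Qed.

Lemma v_pow2_sub1 a : v (2 ^ a - 1) = 0.
Proof. by elim: a => // a IH; rewrite pow2_sub1_double v_odd. Qed.

Lemma b_half_pow2_sub1 a : b (2 ^ a - 1)./2 = 1.
Proof.
case: a => [|a] //; rewrite pow2_sub1_double (_ : _./2 = 2 ^ a - 1) ?b_pow2_sub1 //; lia.
Qed.

Lemma b_pow2 a : b (2 ^ a) = a.+1.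
Proof.
elim: a => // a IH.
by rewrite pow2_double b_even b_pow2_sub1 subn1 prednK ?expn_gt0 // IH addn1.
Qed.

Lemma v_pow2 a : v (2 ^ a) = 0.
Proof.
elim: a => // a IH.
by rewrite pow2_double v_even v_pow2_sub1 b_half_pow2_sub1 subn1 prednK ?expn_gt0 // IH.
Qed.

Lemma b_pow2_sub2 a : b (2 ^ a.+1 - 2) = a.+1.
Proof.
elim: a => // a IH; rewrite pow2_sub2_double b_even IH.
rewrite (_ : (2 ^ a.+1 - 2).+1 = 2 ^ a.+1 - 1) ?b_pow2_sub1 ?add1n //.
by rewrite expnS; have := expn_gt0 2 a; lia.
Qed.

Lemma v_pow2_sub2 a : v (2 ^ a.+1 - 2) = 0.
Proof.
elim: a => // a IH; rewrite pow2_sub2_double v_even IH.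
rewrite (_ : (2 ^ a.+1 - 2).+1 = 2 ^ a.+1 - 1); last by rewrite expnS; have := expn_gt0 2 a; lia.
by rewrite v_pow2_sub1 (_ : _./2 = 2 ^ a - 1) ?b_pow2_sub1 // expnS; lia.
Qed.

Fixpoint bv_rec (fuel n : nat) : nat * int :=
  if fuel is f.+1 then
    if n is 0 then (1, 0%R) else
    if odd n then bv_rec f n./2 else
    let: (b1, v1) := bv_rec f n./2 in
    let: (b0, v0) := bv_rec f n./2.-1 in
    (b1 + b0, (v1 + v0 + (bv_rec f n./2.-1./2).1%:Z - 1)%R)
  else (1, 0%R).

Lemma bv_recE fuel n : n <= fuel -> bv_rec fuel n = (b n, v n).
Proof.
elim: fuel n => [|f IH] n; first by rewrite leqn0 => /eqP ->.
case: (doubleP n) => [|k|k] n_le //=; rewrite odd_double /=.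
  by rewrite uphalf_double IH ?b_odd ?v_odd //; lia.
by rewrite doubleK !IH ?b_even ?v_even //; lia.
Qed.

Lemma bv_eval n : bv_rec n n = (b n, v n).
Proof. exact: bv_recE. Qed.

Definition exceptional := [:: 10; 12; 18; 22; 24; 28].

Definition special (n : nat) : Prop :=
  (exists a, n = 2 ^ a) \/ (exists a, n = 2 ^ a.+1 - 2) \/ n \in exceptional.

Lemma v_double_exceptional k :
  (k \in exceptional) || (k.+1 \in exceptional) ->
  (v k.+1.*2 <= 2)%R -> k.+1.*2 \in exceptional.
Proof.
move=> k_near; have : k \in [:: 9; 10; 11; 12; 17; 18; 21; 22; 23; 24; 27; 28].
  by move: k_near; rewrite !inE; lia.
have/allP table : all (fun k => ((bv_rec k.+1.*2 k.+1.*2).2 <= 2)%R ==> (k.+1.*2 \in exceptional))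
                      [:: 9; 10; 11; 12; 17; 18; 21; 22; 23; 24; 27; 28] by vm_compute.
by move/table; rewrite bv_eval => /implyP.
Qed.

Lemma v_exceptional n : n \in exceptional -> (v n == Posz 2) = (n \in [:: 18; 22; 24; 28]).
Proof.
have/allP table : all (fun n => ((bv_rec n n).2 == Posz 2) == (n \in [:: 18; 22; 24; 28]))
                      exceptional by vm_compute.
by move/table; rewrite bv_eval => /eqP.
Qed.

Lemma special_double_even k :
  ~~ odd k -> special k -> (v k.+1.*2 <= 2)%R -> special k.+1.*2.
Proof.
move=> k_even [[a k_def]|[[a k_def]|k_exc]] v_le2.
- case: a k_def => [|c] k_def; subst k => //.
  have v_eq := v_even (2 ^ c.+1).
  rewrite (_ : _./2 = 2 ^ c) ?b_pow2 in v_eq; last by rewrite expnS; lia.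
  have : c <= 2 by have := v_ge0 (2 ^ c.+1); have := v_ge0 (2 ^ c.+1).+1; lia.
  by case: c {k_even v_eq v_le2} => [|[|[|c]]] // _;
    [right; left; exists 2 | right; right | right; right].
- by right; left; exists a.+1; rewrite k_def pow2_sub2_double.
- by right; right; apply: v_double_exceptional => //; rewrite k_exc.
Qed.

Lemma special_double_odd k :
  odd k -> special k.+1 -> (v k.+1.*2 <= 2)%R -> special k.+1.*2.
Proof.
move=> k_odd [[a k_def]|[[a k_def]|k_exc]] v_le2.
- by left; exists a.+1; rewrite k_def expnS mul2n.
- case: a k_def => [|c] k_def; first by rewrite k_def.
  have {}k_def : k = (2 ^ c.+1 - 2).*2.+1.
    by move: k_def; rewrite !expnS; have := expn_gt0 2 c; lia.
  subst k.
  have v_eq := v_even (2 ^ c.+1 - 2).*2.+1.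
  rewrite (_ : _./2 = 2 ^ c.+1 - 2) ?b_pow2_sub2 in v_eq; last by lia.
  have : c <= 2.
    by have := v_ge0 (2 ^ c.+1 - 2).*2.+1; have := v_ge0 (2 ^ c.+1 - 2).*2.+2; lia.
  by case: c {k_odd v_eq v_le2} => [|[|[|c]]] // _;
    [left; exists 2 | right; right | right; right].
- by right; right; apply: v_double_exceptional => //; rewrite k_exc orbT.
Qed.

Lemma special_of_v_le2 n : ~~ odd n -> (v n <= 2)%R -> special n.
Proof.
elim/double_ind: n => [|k _|k IHk IHk1] n_even v_le2.
- by right; left; exists 0.
- by rewrite /= odd_double in n_even.
have [v1_le2 v0_le2] : (v k.+1 <= 2)%R /\ (v k <= 2)%R.
  by have := v_even k; have := v_ge0 k; have := v_ge0 k.+1; have := b_gt0 k./2; lia.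
case: (boolP (odd k)) => [k_odd|k_even].
  by apply: special_double_odd => //; apply: IHk1; rewrite /= ?k_odd.
by apply: special_double_even => //; apply: IHk.
Qed.

Theorem mainTheorem4 (n : nat) :
  ~~ odd n -> (v n = Posz 2 <-> n \in [:: 18; 22; 24; 28]).
Proof.
move=> n_even; split=> [v_eq2|n_in].
  have v_le2 : (v n <= 2)%R by rewrite v_eq2.
  have [[a n_def]|[[a n_def]|n_exc]] := special_of_v_le2 n_even v_le2.
  - by move: v_eq2; rewrite n_def v_pow2.
  - by move: v_eq2; rewrite n_def v_pow2_sub2.
  - by rewrite -v_exceptional // v_eq2.
have n_exc : n \in exceptional by move: n_in; rewrite !inE; lia.
by apply/eqP; rewrite v_exceptional.
Qed.
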